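(* Let $G$ be a finitely generated, torsion-free, residually finite group and $F$ a group generated by its torsion elements. Then $\operatorname{Spec}_R(G\times F)=\operatorname{Spec}_R(G)\cdot\operatorname{Spec}_R(F)$.
   Context: $R(\psi)$ is the Reidemeister number of an endomorphism $\psi$ of a group $A$ (number of classes of $x\sim gx\psi(g)^{-1}$), $\operatorname{Spec}_R(A)=\{R(\psi)\mid\psi\in\operatorname{Aut}(A)\}$, and for $S,T\subseteq\mathbb{N}\cup\{\infty\}$, $S\cdot T=\{st\mid s\in S,t\in T\}$ with $a\cdot\infty=\infty$. *)

From Stdlib Require Import List Arith.
Import ListNotations.
Set Implicit Arguments.

Record group := Group {
  carrier :> Type;
  gmul : carrier -> carrier -> carrier;
  ginv : carrier -> carrier;
  gone : carrier;
  gmulA : forall x y z, gmul x (gmul y z) = gmul (gmul x y) z;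
  gmul1l : forall x, gmul gone x = x;
  gmul1r : forall x, gmul x gone = x;
  gmulVl : forall x, gmul (ginv x) x = gone;
  gmulVr : forall x, gmul x (ginv x) = gone
}.
Arguments gmul {g}. Arguments ginv {g}. Arguments gone {g}.

Section Prod.
Variables G F : group.
Definition pmul (x y : G * F) : G * F := (gmul (fst x) (fst y), gmul (snd x) (snd y)).
Definition pinv (x : G * F) : G * F := (ginv (fst x), ginv (snd x)).
Definition pone : G * F := (gone, gone).
Lemma pmulA x y z : pmul x (pmul y z) = pmul (pmul x y) z.
Proof. destruct x, y, z; unfold pmul; simpl; rewrite !gmulA; reflexivity. Qed.
Lemma pmul1l x : pmul pone x = x.
Proof. destruct x; unfold pmul; simpl; rewrite !gmul1l; reflexivity. Qed.
Lemma pmul1r x : pmul x pone = x.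
Proof. destruct x; unfold pmul; simpl; rewrite !gmul1r; reflexivity. Qed.
Lemma pmulVl x : pmul (pinv x) x = pone.
Proof. destruct x; unfold pmul; simpl; rewrite !gmulVl; reflexivity. Qed.
Lemma pmulVr x : pmul x (pinv x) = pone.
Proof. destruct x; unfold pmul; simpl; rewrite !gmulVr; reflexivity. Qed.
Definition prod_group : group :=
  @Group (G * F)%type pmul pinv pone pmulA pmul1l pmul1r pmulVl pmulVr.
End Prod.

Section Notions.
Variable G : group.

Fixpoint gpow (x : G) (n : nat) : G :=
  match n with O => gone | S k => gmul x (gpow x k) end.

Inductive generated (S : G -> Prop) : G -> Prop :=
| gen_in x : S x -> generated S x
| gen_one : generated S gone
| gen_mul x y : generated S x -> generated S y -> generated S (gmul x y)
| gen_inv x : generated S x -> generated S (ginv x).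

Definition finitely_generated : Prop :=
  exists l : list G, forall x, generated (fun y => In y l) x.

Definition torsion_elt (x : G) : Prop := exists n, 0 < n /\ gpow x n = gone.

Definition torsion_free : Prop := forall x : G, torsion_elt x -> x = gone.

Definition generated_by_torsion : Prop := forall x : G, generated torsion_elt x.

Definition normal_subgroup (N : G -> Prop) : Prop :=
  N gone /\ (forall x y, N x -> N y -> N (gmul x y)) /\ (forall x, N x -> N (ginv x))
  /\ (forall g x, N x -> N (gmul (gmul g x) (ginv g))).

Definition finite_index (N : G -> Prop) : Prop :=
  exists l : list G, forall g, exists h, In h l /\ N (gmul (ginv h) g).

Definition residually_finite : Prop :=
  forall x : G, x <> gone ->
    exists N, normal_subgroup N /\ finite_index N /\ ~ N x.

Definition endomorphism (psi : G -> G) : Prop :=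
  forall x y, psi (gmul x y) = gmul (psi x) (psi y).

Definition automorphism (psi : G -> G) : Prop :=
  endomorphism psi /\ (forall x y, psi x = psi y -> x = y) /\ (forall y, exists x, psi x = y).

Definition twisted (psi : G -> G) (x y : G) : Prop :=
  exists g, y = gmul (gmul g x) (ginv (psi g)).

Definition n_classes (psi : G -> G) (n : nat) : Prop :=
  exists l : list G, length l = n /\
    (forall i j, i < n -> j < n -> twisted psi (nth i l gone) (nth j l gone) -> i = j) /\
    (forall x, exists i, i < n /\ twisted psi (nth i l gone) x).

(* Reidemeister number with values in N ∪ {∞}; None stands for ∞ *)
Definition reidemeister (psi : G -> G) (r : option nat) : Prop :=
  match r with
  | Some n => n_classes psi n
  | None => forall n, ~ n_classes psi n
  end.

Definition SpecR (r : option nat) : Prop :=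
  exists psi, automorphism psi /\ reidemeister psi r.
End Notions.

Definition omul (a b : option nat) : option nat :=
  match a, b with Some m, Some n => Some (m * n) | _, _ => None end.

Definition set_mul (S T : option nat -> Prop) : option nat -> Prop :=
  fun r => exists s t, S s /\ T t /\ r = omul s t.

(** - Twisted conjugacy is an equivalence; lists of class representatives
      make the Reidemeister number a well-defined quantity.
    - A triangular endomorphism [ψ(g,f) = (φ g, δ g ⋅ α f)] of [G × F] has
      [R(ψ) = R(φ) R(α)] as soon as [δ] kills the twisted stabilisers of [φ].
    - Every automorphism of [G × F] is triangular, with [φ ∈ Aut G] and
      [α ∈ Aut F], because torsion elements of [G × F] lie in [1 × F].
    - Fixed-point theorem: an automorphism of [G] with finitely many twisted
      classes has no nontrivial fixed point (a [φ]-invariant finite quotient,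
      orbit counting, and a bound on Egyptian fractions).  Conjugating [φ] by
      inner automorphisms turns twisted stabilisers into fixed subgroups, so
      they are trivial and [δ] kills them.
    - The two inclusions, hence the theorem, follow. *)
From Pilot Require Import Defs.
From Stdlib Require Import List Arith Lia ClassicalEpsilon.
Import ListNotations.

Arguments gmulA {g} x y z. Arguments gmul1l {g} x. Arguments gmul1r {g} x.
Arguments gmulVl {g} x. Arguments gmulVr {g} x.
Arguments gpow {G} x n. Arguments pmul {G F} x y. Arguments pinv {G F} x.
Arguments twisted {G} psi x y. Arguments n_classes {G} psi n.
Arguments endomorphism {G} psi. Arguments automorphism {G} psi.
Arguments generated {G} S _.
Arguments reidemeister {G} psi r. Arguments normal_subgroup {G} N.
Arguments finite_index {G} N.

Notation "x ⋅ y" := (gmul x y) (at level 40, left associativity).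

Section GroupLemmas.
Context {G : group}.
Implicit Types x y z : G.

Lemma mulKr x y : y ⋅ x ⋅ ginv x = y.
Proof. rewrite <- gmulA, gmulVr, gmul1r. reflexivity. Qed.
Lemma mulVKr x y : y ⋅ ginv x ⋅ x = y.
Proof. rewrite <- gmulA, gmulVl, gmul1r. reflexivity. Qed.
Lemma mulcanl x y z : x ⋅ y = x ⋅ z -> y = z.
Proof.
  intro E. rewrite <- (gmul1l y), <- (gmul1l z), <- (gmulVl x), <- !gmulA, E.
  reflexivity.
Qed.
Lemma mulcanr x y z : y ⋅ x = z ⋅ x -> y = z.
Proof. intro E. rewrite <- (mulKr x y), <- (mulKr x z), E. reflexivity. Qed.
Lemma inv_uniq x y : x ⋅ y = gone -> ginv x = y.
Proof. intro E. apply (mulcanl x). rewrite gmulVr, E. reflexivity. Qed.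
Lemma inv_inv x : ginv (ginv x) = x.
Proof. apply inv_uniq, gmulVl. Qed.
Lemma inv_one : ginv (gone : G) = gone.
Proof. apply inv_uniq, gmul1l. Qed.
Lemma inv_mul x y : ginv (x ⋅ y) = ginv y ⋅ ginv x.
Proof. apply inv_uniq. rewrite !gmulA, mulKr, gmulVr. reflexivity. Qed.
Lemma mul_eq_one x y : x ⋅ ginv y = gone -> x = y.
Proof. intro E. rewrite <- (mulVKr y x), E, gmul1l. reflexivity. Qed.
End GroupLemmas.

Ltac group_simpl :=
  repeat rewrite ?gmulA, ?gmulVl, ?gmulVr, ?gmul1l, ?gmul1r, ?mulKr, ?mulVKr,
    ?inv_mul, ?inv_inv, ?inv_one.

Section Homomorphisms.
Context {G H : group} {f : G -> H}.
Hypothesis f_mul : forall x y, f (x ⋅ y) = f x ⋅ f y.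

Lemma hom_one : f gone = gone.
Proof. apply (mulcanl (f gone)). rewrite <- f_mul, !gmul1r. reflexivity. Qed.
Lemma hom_inv x : f (ginv x) = ginv (f x).
Proof. symmetry. apply inv_uniq. rewrite <- f_mul, gmulVr. apply hom_one. Qed.
End Homomorphisms.

Lemma hom_pow {G : group} {f : G -> G} :
  endomorphism f -> forall x n, f (gpow x n) = gpow (f x) n.
Proof. intros hf x n. induction n; simpl. apply (hom_one hf). rewrite hf, IHn. reflexivity. Qed.

Lemma gpow_one (G : group) n : gpow (gone : G) n = gone.
Proof. induction n; simpl; auto. rewrite IHn. apply gmul1l. Qed.

Lemma gpow_add (G : group) (g : G) a b : gpow g (a + b) = gpow g a ⋅ gpow g b.
Proof. induction a as [|a IH]; simpl. rewrite gmul1l. reflexivity. rewrite IH. apply gmulA. Qed.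

Lemma gpow_prod (G F : group) (x : G) (y : F) n :
  @gpow (prod_group G F) (x, y) n = (gpow x n, gpow y n).
Proof. induction n; simpl. reflexivity. rewrite IHn. reflexivity. Qed.

Section Twisted.
Context {G : group} {psi : G -> G}.
Hypothesis psi_end : endomorphism psi.

Lemma twisted_refl x : twisted psi x x.
Proof. exists gone. rewrite (hom_one psi_end). group_simpl. reflexivity. Qed.
Lemma twisted_sym x y : twisted psi x y -> twisted psi y x.
Proof. intros [g ->]. exists (ginv g). rewrite (hom_inv psi_end). group_simpl. reflexivity. Qed.
Lemma twisted_trans x y z : twisted psi x y -> twisted psi y z -> twisted psi x z.
Proof. intros [g ->] [h ->]. exists (h ⋅ g). rewrite psi_end. group_simpl. reflexivity. Qed.
End Twisted.

Definition class_reps {A} (R : A -> A -> Prop) (l : list A) : Prop :=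
  NoDup l /\ (forall u v, In u l -> In v l -> R u v -> u = v)
  /\ (forall x, exists u, In u l /\ R u x).

Lemma NoDup_map_inj {A B} (f : A -> B) (l : list A) :
  (forall x y, In x l -> In y l -> f x = f y -> x = y) -> NoDup l -> NoDup (map f l).
Proof.
  induction l as [|a l IH]; intros Hi Hn; simpl. constructor.
  inversion Hn; subst. constructor.
  - intro Hin. apply in_map_iff in Hin. destruct Hin as [x [Hx Hxl]].
    assert (x = a) by (apply Hi; simpl; auto). subst. contradiction.
  - apply IH; auto. intros; apply Hi; simpl; auto.
Qed.

Lemma NoDup_prod {A B} (l1 : list A) (l2 : list B) :
  NoDup l1 -> NoDup l2 -> NoDup (list_prod l1 l2).
Proof.
  induction l1 as [|a l1 IH]; intros N1 N2; simpl. constructor.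
  inversion N1; subst. apply NoDup_app; auto.
  - apply NoDup_map_inj; auto. intros x y _ _ E. injection E; auto.
  - intros [x y] Hm Hp. apply in_map_iff in Hm. destruct Hm as [z [E _]].
    injection E as <- <-. apply in_prod_iff in Hp. destruct Hp. contradiction.
Qed.

Section Transversals.
Context {A : Type} {R : A -> A -> Prop}.
Hypothesis R_refl : forall x, R x x.
Hypothesis R_sym : forall x y, R x y -> R y x.
Hypothesis R_trans : forall x y z, R x y -> R y z -> R x z.

Lemma thin_list (l : list A) : exists l', NoDup l'
  /\ (forall u v, In u l' -> In v l' -> R u v -> u = v)
  /\ (forall y, In y l -> exists u, In u l' /\ R u y).
Proof.
  induction l as [|a l IH].
  - exists []. split. constructor. split. intros u v []. intros y [].
  - destruct IH as [l' [N [S C]]].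
    destruct (classic (exists u, In u l' /\ R u a)) as [[u [Hu Hua]]|Hn].
    + exists l'. split; [assumption|split; [assumption|]]. intros y [<-|Hy]; eauto.
    + exists (a :: l'). split; [|split].
      * constructor; [|assumption]. intro Ha. apply Hn. eauto.
      * intros u v [<-|Hu] [<-|Hv] Huv; auto; exfalso; apply Hn; eauto.
      * intros y [<-|Hy]. exists a. simpl; auto.
        destruct (C y Hy) as [u [? ?]]. exists u. simpl; auto.
Qed.

Lemma class_reps_of_cover :
  (exists l, forall x, exists u, In u l /\ R u x) -> exists l', class_reps R l'.
Proof.
  intros [l Hl]. destruct (thin_list l) as [l' [N [S C]]].
  exists l'. split; [assumption|split; [assumption|]].
  intros x. destruct (Hl x) as [u [Hu Hux]]. destruct (C u Hu) as [v [Hv Hvu]]. eauto.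
Qed.

Lemma class_reps_length_le l1 l2 :
  class_reps R l1 -> class_reps R l2 -> length l1 <= length l2.
Proof.
  intros [N1 [S1 C1]] [N2 [S2 C2]].
  destruct l1 as [|a l1']. simpl; lia.
  set (f := fun u => epsilon (inhabits a) (fun v => In v l2 /\ R v u)).
  assert (Hf : forall u, In (f u) l2 /\ R (f u) u).
  { intro u. apply epsilon_spec, C2. }
  rewrite <- (length_map f (a :: l1')). apply NoDup_incl_length.
  - apply NoDup_map_inj; auto. intros x y Hx Hy Hxy.
    apply S1; auto. destruct (Hf x) as [_ H1]. destruct (Hf y) as [_ H2].
    rewrite Hxy in H1. eauto.
  - intros v Hv. apply in_map_iff in Hv. destruct Hv as [u [<- _]]. apply Hf.
Qed.

Lemma indexed_class_reps_iff (d : A) n : (exists l, length l = n /\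
    (forall i j, i < n -> j < n -> R (nth i l d) (nth j l d) -> i = j) /\
    (forall x, exists i, i < n /\ R (nth i l d) x))
  <-> exists l, length l = n /\ class_reps R l.
Proof.
  split.
  - intros [l [Hn [H1 H2]]]. exists l. split; [auto|]. split; [|split].
    + apply (NoDup_nth l d). intros i j Hi Hj E. apply H1; try lia. rewrite E. apply R_refl.
    + intros u v Hu Hv Huv. apply (In_nth l u d) in Hu. apply (In_nth l v d) in Hv.
      destruct Hu as [i [Hi <-]]. destruct Hv as [j [Hj <-]].
      assert (i = j) by (apply H1; try lia; auto). subst; auto.
    + intros x. destruct (H2 x) as [i [Hi Hx]]. exists (nth i l d).
      split; auto. apply nth_In. lia.
  - intros [l [Hn [H1 [H2 H3]]]]. exists l. split; [auto|split].
    + intros i j Hi Hj E. apply (proj1 (NoDup_nth l d) H1); try lia.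
      apply H2; auto; apply nth_In; lia.
    + intros x. destruct (H3 x) as [u [Hu Hux]]. apply (In_nth l u d) in Hu.
      destruct Hu as [i [Hi E]]. exists i. split. lia. rewrite E; auto.
Qed.
End Transversals.

Section ClassNumbers.
Context {G : group} {psi : G -> G}.
Hypothesis psi_end : endomorphism psi.

Lemma n_classes_iff n :
  n_classes psi n <-> exists l, length l = n /\ class_reps (twisted psi) l.
Proof. apply (indexed_class_reps_iff (twisted_refl psi_end)). Qed.

Lemma n_classes_of_cover :
  (exists l, forall x, exists u, In u l /\ twisted psi u x) -> exists n, n_classes psi n.
Proof.
  intro Hc. destruct (class_reps_of_cover (twisted_refl psi_end) (twisted_sym psi_end)
    (twisted_trans psi_end) Hc) as [l Hl].
  exists (length l). apply n_classes_iff. eauto.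
Qed.

Lemma n_classes_cover n :
  n_classes psi n -> exists l, forall x, exists u, In u l /\ twisted psi u x.
Proof. intro Hn. apply n_classes_iff in Hn. destruct Hn as [l [_ [_ [_ C]]]]. eauto. Qed.

Lemma reidemeister_exists : exists r, reidemeister psi r.
Proof.
  destruct (classic (exists n, n_classes psi n)) as [[n Hn]|Hn].
  - exists (Some n). exact Hn.
  - exists None. intros n E. apply Hn. eauto.
Qed.

Lemma reidemeister_unique r1 r2 :
  reidemeister psi r1 -> reidemeister psi r2 -> r1 = r2.
Proof.
  destruct r1 as [a|], r2 as [b|]; simpl; intros H1 H2; try reflexivity.
  - apply n_classes_iff in H1, H2. destruct H1 as [l1 [<- T1]], H2 as [l2 [<- T2]].
    f_equal. apply Nat.le_antisymm; eapply class_reps_length_le; eauto;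
      [apply (twisted_sym psi_end)|apply (twisted_trans psi_end)
      |apply (twisted_sym psi_end)|apply (twisted_trans psi_end)].
  - exfalso. exact (H2 a H1).
  - exfalso. exact (H1 b H2).
Qed.
End ClassNumbers.

(** * Triangular endomorphisms of [G × F]

    An endomorphism of the form [ψ(g,f) = (φ g, δ g ⋅ α f)].  Its twisted
    classes project onto those of [φ]; over a point [x] the fibre is the set
    of [α]-classes, provided [δ] kills the twisted stabiliser
    [{g | g ⋅ x ⋅ φ(g)⁻¹ = x}] of [x].  Hence [R(ψ) = R(φ) R(α)]. *)
Section Triangular.
Variables G F : group.
Variables (phi : G -> G) (alpha : F -> F) (delta : G -> F).
Variable psi : prod_group G F -> prod_group G F.
Hypothesis phi_end : endomorphism phi.
Hypothesis alpha_end : endomorphism alpha.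
Hypothesis delta_mul : forall x y, delta (x ⋅ y) = delta x ⋅ delta y.
Hypothesis psi_end : endomorphism psi.
Hypothesis psi_eq : forall g f, psi (g, f) = (phi g, delta g ⋅ alpha f).

Lemma twisted_triangular a b x y : twisted psi ((a, b) : prod_group G F) (x, y) <->
  exists g h, x = g ⋅ a ⋅ ginv (phi g) /\ y = h ⋅ b ⋅ ginv (alpha h) ⋅ ginv (delta g).
Proof.
  split.
  - intros [[g h] E]. rewrite psi_eq in E. injection E as E1 E2.
    exists g, h. split; auto. rewrite E2. group_simpl. reflexivity.
  - intros [g [h [E1 E2]]]. exists (g, h). rewrite psi_eq. simpl. unfold pmul, pinv; simpl.
    rewrite E1, E2. group_simpl. reflexivity.
Qed.

Lemma twisted_triangular_fst (u v : prod_group G F) :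
  twisted psi u v -> twisted phi (fst u) (fst v).
Proof.
  destruct u as [a b], v as [x y]. intros [g [h [E _]]]%twisted_triangular. exists g. auto.
Qed.

Lemma twisted_triangular_fibre x b y :
  twisted alpha b y -> twisted psi ((x, b) : prod_group G F) (x, y).
Proof.
  intros [h E]. apply twisted_triangular. exists gone, h.
  rewrite (hom_one phi_end), (hom_one delta_mul). group_simpl. auto.
Qed.

(** Every class of [ψ] meets the slice [(x, _)] for each representative [x]
    of the corresponding class of [φ]. *)
Lemma twisted_triangular_move x y g :
  twisted psi ((x, y ⋅ delta g) : prod_group G F) (g ⋅ x ⋅ ginv (phi g), y).
Proof.
  apply twisted_triangular. exists g, gone. split; [reflexivity|].
  rewrite (hom_one alpha_end). group_simpl. reflexivity.
Qed.

Lemma triangular_inf_phi : (forall n, ~ n_classes phi n) -> forall n, ~ n_classes psi n.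
Proof.
  intros Hinf n Hn. destruct (n_classes_cover psi_end n Hn) as [L CL].
  destruct (n_classes_of_cover phi_end) as [m Hm]; [|exact (Hinf m Hm)].
  exists (map fst L). intro x. destruct (CL (x, gone)) as [u [Hu Tu]].
  exists (fst u). split. apply in_map; auto. apply (twisted_triangular_fst _ _ Tu).
Qed.

Section KilledStabiliser.
Hypothesis delta_stab : forall x g, g ⋅ x ⋅ ginv (phi g) = x -> delta g = gone.

Lemma twisted_triangular_fibre_inv x b y :
  twisted psi ((x, b) : prod_group G F) (x, y) -> twisted alpha b y.
Proof.
  intros [g [h [E1 E2]]]%twisted_triangular.
  rewrite (delta_stab x g) in E2 by auto. exists h. rewrite E2. group_simpl. reflexivity.
Qed.

Lemma triangular_class_reps lx ly :
  class_reps (twisted phi) lx -> class_reps (twisted alpha) ly ->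
  class_reps (twisted psi) (list_prod lx ly : list (prod_group G F)).
Proof.
  intros [Nx [Sx Cx]] [Ny [Sy Cy]]. split; [|split].
  - apply NoDup_prod; auto.
  - intros [x y] [x' y'] Hu Hv T. apply in_prod_iff in Hu, Hv. destruct Hu, Hv.
    assert (x = x') by (apply Sx; auto; apply (twisted_triangular_fst _ _ T)). subst x'.
    f_equal. apply Sy; auto. apply (twisted_triangular_fibre_inv x _ _ T).
  - intros [x y]. destruct (Cx x) as [x0 [Hx0 [g ->]]].
    destruct (Cy (y ⋅ delta g)) as [y1 [Hy1 T1]].
    exists (x0, y1). split. apply in_prod_iff; auto.
    eapply (twisted_trans psi_end). apply (twisted_triangular_fibre x0 _ _ T1).
    apply twisted_triangular_move.
Qed.

Lemma triangular_inf_alpha : (forall n, ~ n_classes alpha n) -> forall n, ~ n_classes psi n.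
Proof.
  intros Hinf n Hn. destruct (n_classes_cover psi_end n Hn) as [L CL].
  set (c := fun u : prod_group G F =>
    epsilon (inhabits (gone : F)) (fun y => twisted psi u (gone, y))).
  destruct (n_classes_of_cover alpha_end) as [m Hm]; [|exact (Hinf m Hm)].
  exists (map c L). intro y. destruct (CL (gone, y)) as [u [Hu Tu]].
  exists (c u). split. apply in_map; auto.
  assert (Tc : twisted psi u (gone, c u)) by (apply epsilon_spec; eauto).
  apply (twisted_triangular_fibre_inv gone).
  eapply (twisted_trans psi_end); [apply (twisted_sym psi_end), Tc | exact Tu].
Qed.
End KilledStabiliser.

Lemma reidemeister_triangular
  (delta_stab : (exists n, n_classes phi n) ->
     forall x g, g ⋅ x ⋅ ginv (phi g) = x -> delta g = gone)
  rp ra : reidemeister phi rp -> reidemeister alpha ra -> reidemeister psi (omul rp ra).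
Proof.
  intros Rp Ra. destruct rp as [a|]; simpl.
  - assert (H := delta_stab (ex_intro _ a Rp)). destruct ra as [b|]; simpl in *.
    + apply (n_classes_iff phi_end) in Rp. apply (n_classes_iff alpha_end) in Ra.
      destruct Rp as [lx [<- Tx]], Ra as [ly [<- Ty]].
      apply (n_classes_iff psi_end). exists (list_prod lx ly).
      split. apply length_prod. apply triangular_class_reps; auto.
    + apply (triangular_inf_alpha H Ra).
  - apply (triangular_inf_phi Rp).
Qed.
End Triangular.

(** * Automorphisms of [G × F] are triangular

    If [G] is torsion-free and [F] is generated by torsion, an automorphism
    [ψ] of [G × F] maps the torsion generators of [1 × F] into [1 × F], hence
    [ψ(1 × F) = 1 × F]; writing [ψ(g, 1) = (φ g, δ g)] and [ψ(1, f) = (1, α f)]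
    gives [ψ(g,f) = (φ g, δ g ⋅ α f)] with [φ ∈ Aut G] and [α ∈ Aut F]. *)
Section ProductInclusions.
Variables G F : group.

Lemma pair_split (g : G) (f : F) :
  ((g, f) : prod_group G F) = pmul ((g, gone) : prod_group G F) (gone, f).
Proof. unfold pmul; simpl. rewrite gmul1l, gmul1r. reflexivity. Qed.
Lemma inG_mul (x y : G) :
  ((x ⋅ y, gone) : prod_group G F) = pmul ((x, gone) : prod_group G F) (y, gone).
Proof. unfold pmul; simpl. rewrite gmul1l. reflexivity. Qed.
Lemma inF_mul (x y : F) :
  ((gone, x ⋅ y) : prod_group G F) = pmul ((gone, x) : prod_group G F) (gone, y).
Proof. unfold pmul; simpl. rewrite gmul1l. reflexivity. Qed.
Lemma inF_inv (x : F) :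
  ((gone, ginv x) : prod_group G F) = pinv ((gone, x) : prod_group G F).
Proof. unfold pinv; simpl. rewrite inv_one. reflexivity. Qed.
End ProductInclusions.

Section ProductAutomorphisms.
Variables G F : group.
Hypothesis G_tf : torsion_free G.
Hypothesis F_tgen : generated_by_torsion F.
Variable psi : prod_group G F -> prod_group G F.
Hypothesis psi_aut : automorphism psi.

Let psi_end : endomorphism psi := proj1 psi_aut.
Let psi_inj : forall x y, psi x = psi y -> x = y := proj1 (proj2 psi_aut).
Let psi_surj : forall y, exists x, psi x = y := proj2 (proj2 psi_aut).

Definition aut_phi (g : G) : G := fst (psi (g, gone)).
Definition aut_delta (g : G) : F := snd (psi (g, gone)).
Definition aut_alpha (f : F) : F := snd (psi (gone, f)).

Lemma psi_mul (u v : prod_group G F) : psi (pmul u v) = pmul (psi u) (psi v).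
Proof. apply psi_end. Qed.
Lemma psi_inv (u : prod_group G F) : psi (pinv u) = pinv (psi u).
Proof. apply (hom_inv psi_end). Qed.
Lemma psi_one : psi (gone, gone) = (gone, gone).
Proof. apply (hom_one psi_end). Qed.

Lemma torsion_pair_fst (a : G) (b : F) n :
  0 < n -> @gpow (prod_group G F) (a, b) n = (gone, gone) -> a = gone.
Proof.
  intros Hn E. apply G_tf. exists n. split; auto. rewrite gpow_prod in E. injection E; auto.
Qed.

Lemma psi_F_into_F f : fst (psi (gone, f)) = gone.
Proof.
  induction (F_tgen f) as [x [n [Hn E]]| |x y _ IHx _ IHy|x _ IHx].
  - destruct (psi (gone, x)) as [a b] eqn:Ea. simpl. apply (torsion_pair_fst a b n Hn).
    rewrite <- Ea, <- (hom_pow psi_end), gpow_prod, gpow_one, E. apply psi_one.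
  - rewrite psi_one. reflexivity.
  - rewrite inF_mul, psi_mul. unfold pmul. simpl. rewrite IHx, IHy. apply gmul1l.
  - rewrite inF_inv, psi_inv. unfold pinv. simpl. rewrite IHx. apply inv_one.
Qed.

Lemma psi_F_onto_F f : exists y, psi (gone, y) = (gone, f).
Proof.
  induction (F_tgen f) as [x [n [Hn E]]| |x y _ IHx _ IHy|x _ IHx].
  - destruct (psi_surj (gone, x)) as [[a b] Ez].
    assert (a = gone) as ->; [|eauto].
    apply (torsion_pair_fst a b n Hn), psi_inj.
    rewrite (hom_pow psi_end), Ez, gpow_prod, gpow_one, E, psi_one. reflexivity.
  - exists gone. apply psi_one.
  - destruct IHx as [a Ea], IHy as [b Eb]. exists (a ⋅ b).
    rewrite inF_mul, psi_mul, Ea, Eb. unfold pmul; simpl. rewrite gmul1l. reflexivity.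
  - destruct IHx as [a Ea]. exists (ginv a).
    rewrite inF_inv, psi_inv, Ea. unfold pinv; simpl. rewrite inv_one. reflexivity.
Qed.

Lemma psi_triangular g f : psi (g, f) = (aut_phi g, aut_delta g ⋅ aut_alpha f).
Proof.
  rewrite pair_split, psi_mul. unfold pmul, aut_phi, aut_delta, aut_alpha.
  rewrite psi_F_into_F, gmul1r. reflexivity.
Qed.

Lemma aut_delta_mul x y : aut_delta (x ⋅ y) = aut_delta x ⋅ aut_delta y.
Proof. unfold aut_delta. rewrite inG_mul, psi_mul. reflexivity. Qed.

Lemma aut_alpha_aut : automorphism aut_alpha.
Proof.
  split; [|split].
  - intros x y. unfold aut_alpha. rewrite inF_mul, psi_mul. reflexivity.
  - intros x y E. assert (E' : psi (gone, x) = psi (gone, y)) by (rewrite !psi_triangular, E; auto).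
    apply psi_inj in E'. injection E'; auto.
  - intro y. destruct (psi_F_onto_F y) as [x E]. exists x. unfold aut_alpha. rewrite E. auto.
Qed.

Lemma aut_phi_aut : automorphism aut_phi.
Proof.
  split; [|split].
  - intros x y. unfold aut_phi. rewrite inG_mul, psi_mul. reflexivity.
  - intros x y E. destruct (psi_F_onto_F (aut_delta x ⋅ ginv (aut_delta y))) as [f Ef].
    assert (E' : psi (pmul (x, gone) (pinv (y, gone))) = psi (gone, f)).
    { rewrite Ef, psi_mul, psi_inv, !psi_triangular. unfold pmul, pinv; simpl.
      rewrite E, gmulVr, (hom_one (proj1 aut_alpha_aut)), !gmul1r. reflexivity. }
    apply psi_inj in E'. injection E' as E' _. apply mul_eq_one, E'.
  - intro y. destruct (psi_surj (y, gone)) as [[x f] E]. exists x.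
    rewrite psi_triangular in E. injection E; auto.
Qed.
End ProductAutomorphisms.

Lemma diagonal_aut (G F : group) (phi : G -> G) (alpha : F -> F) :
  automorphism phi -> automorphism alpha ->
  automorphism (fun u : prod_group G F => ((phi (fst u), alpha (snd u)) : prod_group G F)).
Proof.
  intros [phi_end [phi_inj phi_surj]] [alpha_end [alpha_inj alpha_surj]]. split; [|split].
  - intros [a b] [c d]. simpl. unfold pmul; simpl. rewrite phi_end, alpha_end. reflexivity.
  - intros [a b] [c d] E. injection E as E1 E2.
    apply phi_inj in E1. apply alpha_inj in E2. subst. reflexivity.
  - intros [y z]. destruct (phi_surj y) as [a <-], (alpha_surj z) as [b <-]. exists (a, b). auto.
Qed.

(** * Twisting by an inner automorphism

    [g ⋅ x ⋅ φ(g)⁻¹ = x] says that [g] is fixed by [y ↦ x ⋅ φ y ⋅ x⁻¹], and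
    right multiplication by [x⁻¹] maps twisted classes of [φ] bijectively to
    those of this shifted endomorphism.  This reduces the twisted stabilisers
    to fixed subgroups. *)
Section Shift.
Context {G : group} (phi : G -> G) (x : G).
Hypothesis phi_end : endomorphism phi.

Definition shift (y : G) : G := x ⋅ phi y ⋅ ginv x.

Lemma shift_end : endomorphism shift.
Proof. intros a b. unfold shift. rewrite phi_end. group_simpl. reflexivity. Qed.

Lemma shift_surj : (forall y, exists z, phi z = y) -> forall y, exists z, shift z = y.
Proof.
  intros phi_surj y. destruct (phi_surj (ginv x ⋅ y ⋅ x)) as [z E].
  exists z. unfold shift. rewrite E. group_simpl. reflexivity.
Qed.

Lemma shift_fixed g : g ⋅ x ⋅ ginv (phi g) = x -> shift g = g.
Proof. intro E. unfold shift. rewrite <- E at 1. group_simpl. reflexivity. Qed.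

Lemma shift_cover (L : list G) : (forall y, exists u, In u L /\ twisted phi u y) ->
  forall y, exists u, In u (map (fun z => z ⋅ ginv x) L) /\ twisted shift u y.
Proof.
  intros C y. destruct (C (y ⋅ x)) as [u [Hu [h E]]]. exists (u ⋅ ginv x).
  split. apply (in_map (fun z => z ⋅ ginv x)); auto.
  exists h. apply (mulcanr x). unfold shift. rewrite E. group_simpl. reflexivity.
Qed.
End Shift.

Section FiniteIndex.
Context {G : group}.

Lemma normal_inter (N1 N2 : G -> Prop) : normal_subgroup N1 -> normal_subgroup N2 ->
  normal_subgroup (fun x => N1 x /\ N2 x).
Proof. intros [a1 [b1 [c1 d1]]] [a2 [b2 [c2 d2]]]. repeat split; firstorder. Qed.

Lemma finite_index_inter (N1 N2 : G -> Prop) : normal_subgroup N1 -> normal_subgroup N2 ->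
  finite_index N1 -> finite_index N2 -> finite_index (fun x => N1 x /\ N2 x).
Proof.
  intros [_ [M1 [V1 _]]] [_ [M2 [V2 _]]] [l1 H1] [l2 H2].
  set (pick := fun p : G * G => epsilon (inhabits (gone : G))
     (fun z => N1 (ginv (fst p) ⋅ z) /\ N2 (ginv (snd p) ⋅ z))).
  exists (map pick (list_prod l1 l2)). intro g.
  destruct (H1 g) as [h1 [I1 E1]], (H2 g) as [h2 [I2 E2]].
  assert (P : N1 (ginv h1 ⋅ pick (h1, h2)) /\ N2 (ginv h2 ⋅ pick (h1, h2))).
  { apply (epsilon_spec (inhabits (gone : G))
      (fun z => N1 (ginv (fst (h1, h2)) ⋅ z) /\ N2 (ginv (snd (h1, h2)) ⋅ z))). eauto. }
  exists (pick (h1, h2)). split. apply in_map, in_prod_iff; auto.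
  destruct P as [P1 P2]. split.
  - replace (ginv (pick (h1, h2)) ⋅ g) with (ginv (ginv h1 ⋅ pick (h1, h2)) ⋅ (ginv h1 ⋅ g))
      by (group_simpl; reflexivity). auto.
  - replace (ginv (pick (h1, h2)) ⋅ g) with (ginv (ginv h2 ⋅ pick (h1, h2)) ⋅ (ginv h2 ⋅ g))
      by (group_simpl; reflexivity). auto.
Qed.

Lemma residually_finite_powers (g : G) : torsion_free G -> residually_finite G ->
  g <> gone -> forall B, exists N, normal_subgroup N /\ finite_index N
    /\ forall i, 0 < i -> i <= B -> ~ N (gpow g i).
Proof.
  intros tf rf ng B. induction B as [|B [N [Nn [Nf Na]]]].
  - exists (fun _ => True). split. repeat split; auto. split; [|intros; lia].
    exists [gone]. intro x. exists gone. split; simpl; auto.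
  - destruct (rf (gpow g (S B))) as [N' [Nn' [Nf' Na']]].
    { intro E. apply ng, tf. exists (S B). split; [lia | exact E]. }
    exists (fun x => N x /\ N' x). split. apply normal_inter; auto.
    split. apply finite_index_inter; auto.
    intros i Hi Hb [Hx Hx']. destruct (Nat.eq_dec i (S B)) as [->|]; auto.
    apply (Na i); auto. lia.
Qed.

Lemma coset_class_reps (N : G -> Prop) : normal_subgroup N -> finite_index N ->
  exists l, class_reps (fun u v => N (ginv u ⋅ v)) l.
Proof.
  intros [N1 [NM [NV _]]] [l Hl]. apply class_reps_of_cover; [| | |exists l; exact Hl].
  - intro x. rewrite gmulVl. auto.
  - intros x y Hxy. replace (ginv y ⋅ x) with (ginv (ginv x ⋅ y)) by (group_simpl; reflexivity).
    auto.
  - intros x y z H1 H2.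
    replace (ginv x ⋅ z) with ((ginv x ⋅ y) ⋅ (ginv y ⋅ z)) by (group_simpl; reflexivity). auto.
Qed.
End FiniteIndex.

From mathcomp Require all_boot all_order all_algebra all_fingroup.

(** * Finite quotients and the fixed-point theorem *)
Module FixedPoints.
Import all_boot all_order all_algebra all_fingroup.
Import GRing.Theory Num.Theory Order.TTheory.

(** Boolean reflection of a proposition by excluded middle, used to carve the
    (classically described) image of [G] out of a finite type. *)
Definition classical_bool (P : Prop) : bool :=
  if excluded_middle_informative P then true else false.
Lemma classical_boolP (P : Prop) : classical_bool P <-> P.
Proof. by rewrite /classical_bool; case: excluded_middle_informative. Qed.

Section Egyptian.
Local Open Scope ring_scope.

Definition egyptian_bound (n : nat) (r : rat) (B : nat) : Prop :=
  forall s : seq nat, (size s <= n)%N -> all (fun d => 0 < d)%N s ->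
    \sum_(d <- s) (d%:R : rat)^-1 = r -> all (fun d => d <= B)%N s.

Lemma egyptian_bound_mono n r B B' :
  (B <= B')%N -> egyptian_bound n r B -> egyptian_bound n r B'.
Proof.
move=> le_BB' bound s size_s pos_s sum_s.
by apply: sub_all (bound s size_s pos_s sum_s) => d /= /leq_trans; apply.
Qed.

(** Nonempty sums of positive reciprocals are positive. *)
Lemma egyptian_bound_nonpos n r B : r <= 0 -> egyptian_bound n r B.
Proof.
move=> r_le0 [|d s] // _ /andP [d_gt0 pos_s]; rewrite big_cons => sum_s.
suff : 0 < r by rewrite ltNge r_le0.
rewrite -sum_s; apply: ltr_wpDr; first by apply: sumr_ge0 => e _; rewrite invr_ge0.
by rewrite invr_gt0 ltr0n.
Qed.

Lemma sum_inv_le_const (s : seq nat) (c : rat) :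
  (forall d, d \in s -> (d%:R)^-1 <= c) -> \sum_(d <- s) (d%:R : rat)^-1 <= (size s)%:R * c.
Proof.
elim: s => [|a s IH] le_c; first by rewrite big_nil mul0r.
rewrite big_cons /= -natr1 mulrDl mul1r [X in _ <= X]addrC.
apply: lerD; first by apply: le_c; rewrite inE eqxx.
by apply: IH => d d_s; apply: le_c; rewrite inE d_s orbT.
Qed.

Lemma egyptian_small_term (s : seq nat) (r : rat) (M : nat) :
  all (fun d => 0 < d)%N s -> \sum_(d <- s) (d%:R : rat)^-1 = r ->
  (size s)%:R < r * M.+1%:R -> has (fun d => d <= M)%N s.
Proof.
move=> pos_s sum_s size_lt; apply/negPn/negP => /hasPn large.
have small_inv d : d \in s -> (d%:R : rat)^-1 <= (M.+1%:R)^-1.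
  move=> d_s; have d_gt0 : (0 < d)%N by move/allP: pos_s; apply.
  by rewrite lef_pV2 ?posrE ?ltr0n // ler_nat ltnNge large.
have := sum_inv_le_const _ _ small_inv; rewrite sum_s ler_pdivlMr ?ltr0n //.
by rewrite leNgt size_lt.
Qed.

Lemma uniform_bound (P : nat -> nat -> Prop) (K : nat) :
  (forall v B B', (B <= B')%N -> P v B -> P v B') -> (forall v, exists B, P v B) ->
  exists B, forall v, (v <= K)%N -> P v B.
Proof.
move=> mono ex_P; elim: K => [|K [B1 HB1]].
  by have [B HB] := ex_P 0%N; exists B => v; rewrite leqn0 => /eqP ->.
have [B2 HB2] := ex_P K.+1; exists (maxn B1 B2) => v.
rewrite leq_eqVlt ltnS => /orP [/eqP -> | le_vK].
  by apply: mono HB2; apply: leq_maxr.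
by apply: mono (HB1 v le_vK); apply: leq_maxl.
Qed.

(** By induction on [n]: some denominator [d] is small, and the remaining
    ones decompose [r - 1/d], for one of finitely many values of [d]. *)
Lemma egyptian_bound_exists (n : nat) (r : rat) : exists B, egyptian_bound n r B.
Proof.
elim: n r => [|n IH] r.
  by exists 0%N => s; rewrite leqn0 => /nilP ->.
have [r_le0|r_gt0] := lerP r 0; first by exists 0%N; apply: egyptian_bound_nonpos.
pose M := Num.Def.archi_bound ((n.+1)%:R / r).
have HM : (n.+1)%:R < r * M.+1%:R.
  rewrite mulrC -ltr_pdivrMr //; apply: lt_trans (archi_boundP _) _.
    by apply: divr_ge0 => //; apply: ltW.
  by rewrite ltr_nat.
have [B0 HB0] := @uniform_bound _ M (fun v => @egyptian_bound_mono n (r - (v%:R)^-1))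
  (fun v => IH (r - (v%:R)^-1)).
exists (maxn M B0) => s size_s pos_s sum_s.
have /hasP [d d_s le_dM] : has (fun d => d <= M)%N s.
  by apply: egyptian_small_term pos_s sum_s (le_lt_trans _ HM); rewrite ler_nat.
have perm_s := perm_to_rem d_s.
have sum_rem : \sum_(e <- rem d s) (e%:R : rat)^-1 = r - (d%:R)^-1.
  by rewrite -sum_s (perm_big _ perm_s) big_cons addrC addKr.
have pos_rem : all (fun d => 0 < d)%N (rem d s).
  by apply/allP => e /mem_rem e_s; move/allP: pos_s; apply.
have size_rem : (size (rem d s) <= n)%N by rewrite size_rem //; move: size_s; case: (size s).
have /allP bound_rem := HB0 d le_dM _ size_rem pos_rem sum_rem.
apply/allP => e; rewrite (perm_mem perm_s) inE => /orP [/eqP -> | e_rem].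
  exact: leq_trans le_dM (leq_maxl _ _).
exact: leq_trans (bound_rem e e_rem) (leq_maxr _ _).
Qed.
End Egyptian.

(** If a finite group [A] acts on a set [D] with [|D| = |A|], the stabiliser
    orders [|A_x| = |A| / |Ax|] of orbit representatives form an Egyptian
    decomposition of [Σ |Ax| / |A| = 1].  Hence, with at most [n] orbits,
    every stabiliser has order at most the Egyptian bound for [n] and [1]. *)
Section OrbitCounting.
Local Open Scope group_scope.
Variables (aT : finGroupType) (rT : finType) (A : {group aT}) (to : action A rT).

Lemma orbit_index (y : rT) : (#|A| %/ #|orbit to A y| = #|'C_A[y | to]|)%N.
Proof.
have card_orbit := card_orbit_in_stab to y (subxx A).
have orbit_gt0 : (0 < #|orbit to A y|)%N by apply/card_gt0P; exists y; apply: orbit_refl.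
by rewrite -{1}card_orbit mulKn.
Qed.

Lemma stabiliser_bound (D : {set rT}) (n B : nat) :
  egyptian_bound n 1 B -> [acts A, on D | to] -> #|D| = #|A| ->
  (#|orbit to A @: D| <= n)%N -> forall x, x \in D -> (#|'C_A[x | to]| <= B)%N.
Proof.
move=> bound actsD cardD orbits_n x xD.
pose P := orbit to A @: D; pose index (Ob : {set rT}) := (#|A| %/ #|Ob|)%N.
have A_gt0 : (0 < #|A|)%N by apply/card_gt0P; exists 1%g; apply: group1.
have index_spec Ob : Ob \in P -> (0 < #|Ob|)%N /\ (index Ob * #|Ob| = #|A|)%N.
  move=> /imsetP [y _ ->]; rewrite /index orbit_index mulnC card_orbit_in_stab //.
  by split=> //; apply/card_gt0P; exists y; apply: orbit_refl.
have /allP small : all (fun d => d <= B)%N [seq index Ob | Ob <- enum P].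
  apply: bound; first by rewrite size_map -cardE.
    apply/allP => d /mapP [Ob /[!mem_enum] /index_spec [_ eq_A] ->].
    by move: A_gt0; rewrite -eq_A muln_gt0 => /andP [].
  rewrite big_map big_enum /=.
  have -> : (\sum_(Ob in P) ((index Ob)%:R : rat)^-1 = \sum_(Ob in P) #|Ob|%:R / #|A|%:R)%R.
    apply: eq_bigr => Ob /index_spec [Ob_gt0 <-].
    by rewrite natrM invfM mulrCA divff ?mulr1 // pnatr_eq0 -lt0n.
  by rewrite -mulr_suml -natr_sum acts_sum_card_orbit // cardD divff // pnatr_eq0 -lt0n.
by rewrite -orbit_index; apply: small; apply: map_f; rewrite mem_enum; apply: imset_f.
Qed.
End OrbitCounting.
Arguments stabiliser_bound {aT rT A to D n B}.

(** For a normal subgroup [N] with a finite class_reps [l], left translation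
    [z ↦ (rep i ↦ coset of z⁻¹ ⋅ rep i)] is a homomorphism from [G] into the
    finite group of permutations of the [K = |l|] cosets, with kernel in [N]. *)
Section CosetPermutations.
Variable G : Defs.group.
Variable N : G -> Prop.
Hypothesis N_normal : normal_subgroup N.
Variable l : list G.
Hypothesis l_transversal : class_reps (fun u v => N (ginv u ⋅ v)) l.

Let N_one : N gone := proj1 N_normal.
Let N_mul {x y : G} (a : N x) (b : N y) : N (x ⋅ y) := proj1 (proj2 N_normal) x y a b.
Let N_inv {x : G} (a : N x) : N (ginv x) := proj1 (proj2 (proj2 N_normal)) x a.
Let N_conj (g : G) {x : G} (a : N x) : N (g ⋅ x ⋅ ginv g) :=
  proj2 (proj2 (proj2 N_normal)) g x a.

Lemma coset_trans {x y z : G} : N (ginv x ⋅ y) -> N (ginv y ⋅ z) -> N (ginv x ⋅ z).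
Proof. by move=> h1 h2; have := N_mul h1 h2; group_simpl. Qed.
Lemma coset_sym {x y : G} : N (ginv x ⋅ y) -> N (ginv y ⋅ x).
Proof. by move=> h; have := N_inv h; group_simpl. Qed.

Let K := length l.
Definition rep (i : 'I_K) : G := List.nth i l gone.

Lemma rep_in (i : 'I_K) : In (rep i) l.
Proof. by apply: nth_In; apply/ssrnat.ltP. Qed.

Lemma coset_index_ex z : exists i : 'I_K, N (ginv (rep i) ⋅ z).
Proof.
case: l_transversal => _ [_ cover]; case: (cover z) => u [u_l Nuz].
case: (In_nth l u gone u_l) => n [lt_n nth_n].
by exists (Ordinal (introT ssrnat.ltP lt_n)); rewrite /rep /= nth_n.
Qed.

Definition coset_index z : 'I_K :=
  proj1_sig (constructive_indefinite_description _ (coset_index_ex z)).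
Lemma coset_indexP z : N (ginv (rep (coset_index z)) ⋅ z).
Proof. exact: (proj2_sig (constructive_indefinite_description _ (coset_index_ex z))). Qed.

Lemma rep_inj i j : N (ginv (rep i) ⋅ rep j) -> i = j.
Proof.
move=> Nij; case: l_transversal => l_uniq [l_sep _].
apply: ord_inj; apply: (proj1 (NoDup_nth l gone) l_uniq); try exact/ssrnat.ltP.
by apply: l_sep => //; apply: rep_in.
Qed.

Lemma coset_index_rep i : coset_index (rep i) = i.
Proof. by apply: rep_inj; apply: coset_indexP. Qed.

Lemma coset_indexE a b : coset_index a = coset_index b <-> N (ginv a ⋅ b).
Proof.
split=> [eq_ab | Nab].
  by apply: (coset_trans (coset_sym (coset_indexP a))); rewrite eq_ab; apply: coset_indexP.
apply: rep_inj; apply: (coset_trans (coset_indexP a)); apply: (coset_trans Nab).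
exact: coset_sym (coset_indexP b).
Qed.

Definition coset_act (z : G) (i : 'I_K) : 'I_K := coset_index (ginv z ⋅ rep i).
Lemma coset_act_inj z : injective (coset_act z).
Proof. by move=> i j /coset_indexE Nij; apply: rep_inj; move: Nij; group_simpl. Qed.
Definition coset_perm z : {perm 'I_K} := perm (coset_act_inj z).

Lemma coset_permM x y : coset_perm (x ⋅ y) = (coset_perm x * coset_perm y)%g.
Proof.
apply/permP => i; rewrite permM !permE /coset_act; symmetry; apply/coset_indexE.
by move: (coset_indexP (ginv x ⋅ rep i)); group_simpl.
Qed.
Lemma coset_perm1 : coset_perm gone = 1%g.
Proof. by apply/permP => i; rewrite perm1 permE /coset_act; group_simpl; apply: coset_index_rep. Qed.
Lemma coset_permV x : coset_perm (ginv x) = (coset_perm x)^-1%g.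
Proof. by apply/eqP; rewrite eq_sym eq_invg_mul -coset_permM gmulVr coset_perm1. Qed.

Lemma coset_perm_ker z : coset_perm z = 1%g -> N z.
Proof.
move=> triv; have : coset_perm z (coset_index gone) = coset_index gone by rewrite triv perm1.
rewrite permE /coset_act; set r := rep (coset_index gone) => fix_r.
have N_r : N r by have := N_inv (coset_indexP gone); rewrite gmul1r inv_inv.
have : N (ginv (ginv z ⋅ r) ⋅ r) by apply/coset_indexE; rewrite fix_r /r coset_index_rep.
by move=> /(N_conj r); group_simpl.
Qed.

(** As [G] is generated by the finite list [S], [coset_perm ∘ φᵗ] is
    determined by its profile on [S], which ranges over a finite set.  A
    repeated profile [a < b] and surjectivity of [φ] give a period [p = b - a]:
    [coset_perm y = coset_perm (φᵖ y)] for all [y]. *)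
Section Periodicity.
Variable S : list G.
Hypothesis S_gen : forall x, Defs.generated (fun y => In y S) x.
Variable phi : G -> G.
Hypothesis phi_end : endomorphism phi.
Hypothesis phi_surj : forall y, exists x, phi x = y.

Lemma iter_end t : endomorphism (iter t phi).
Proof. by elim: t => [|t IH] x y //=; rewrite IH phi_end. Qed.

Lemma iter_surj t y : exists x, iter t phi x = y.
Proof.
elim: t y => [|t IH] y; first by exists y.
by have [z <-] := phi_surj y; have [x <-] := IH z; exists x.
Qed.

Let m := length S.
Definition profile (t : nat) : {ffun 'I_m -> {perm 'I_K}} :=
  [ffun j : 'I_m => coset_perm (iter t phi (List.nth j S gone))].

Lemma profile_repeats : exists a b, a < b /\ profile a = profile b.
Proof.
pose C := #|{ffun 'I_m -> {perm 'I_K}}|.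
have [/injectiveP inj | /injectivePn [x [y neq_xy eq_xy]]] :=
  boolP (injectiveb (fun t : 'I_C.+1 => profile t)).
  by have := leq_card _ inj; rewrite card_ord ltnn.
by case: (ltngtP x y) => [lt_xy | lt_yx | /val_inj eq_xy']; [exists x, y | exists y, x |
  rewrite eq_xy' eqxx in neq_xy].
Qed.

Lemma profile_determines a b :
  profile a = profile b -> forall x, coset_perm (iter a phi x) = coset_perm (iter b phi x).
Proof.
move=> eq_ab x; elim: (S_gen x) => {x} [y y_S| |y z _ IHy _ IHz|y _ IHy].
- case: (In_nth S y gone y_S) => n [lt_n nth_n].
  have := congr1 (fun P : {ffun _ -> _} => P (Ordinal (introT ssrnat.ltP lt_n))) eq_ab.
  by rewrite !ffunE /= nth_n.
- by rewrite (hom_one (iter_end a)) (hom_one (iter_end b)).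
- by rewrite (iter_end a) (iter_end b) !coset_permM IHy IHz.
- by rewrite (hom_inv (iter_end a)) (hom_inv (iter_end b)) !coset_permV IHy.
Qed.

Lemma coset_perm_period : exists p, 0 < p /\ forall y, coset_perm y = coset_perm (iter p phi y).
Proof.
have [a [b [lt_ab eq_ab]]] := profile_repeats.
exists (b - a); split; first by rewrite subn_gt0.
move=> y; have [x <-] := iter_surj a y.
by rewrite -iterD subnK ?(ltnW lt_ab) // (profile_determines _ _ eq_ab).
Qed.

(** With period [p], [x ↦ (coset_perm (φⁱ x))_{i<p}] is a homomorphism
    [stack_perm] into the permutations of ['I_p × 'I_K] whose kernel is inside
    [N] and is [φ]-invariant.  So [φ] induces an endomorphism [quot_phi] of
    the finite image [Q], and twisted conjugacy on [G] maps onto the twisted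
    action [t · q = q⁻¹ t quot_phi(q)] of [Q] on itself. *)
Section Quotient.
Variable p : nat.
Hypothesis p_gt0 : 0 < p.
Hypothesis period : forall y, coset_perm y = coset_perm (iter p phi y).

Definition stack_act (x : G) (u : 'I_p * 'I_K) : 'I_p * 'I_K :=
  (u.1, coset_perm (iter u.1 phi x) u.2).
Lemma stack_act_inj x : injective (stack_act x).
Proof. by move=> [i c] [j d] [/= eq_ij]; rewrite eq_ij => /perm_inj ->. Qed.
Definition stack_perm x : {perm 'I_p * 'I_K} := perm (stack_act_inj x).

Lemma stack_permM x y : stack_perm (x ⋅ y) = (stack_perm x * stack_perm y)%g.
Proof.
by apply/permP => -[i c]; rewrite permM !permE /stack_act /= (iter_end i) coset_permM permM.
Qed.
Lemma stack_perm1 : stack_perm gone = 1%g.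
Proof.
by apply/permP => -[i c]; rewrite perm1 permE /stack_act /= (hom_one (iter_end i)) coset_perm1 perm1.
Qed.
Lemma stack_permV x : stack_perm (ginv x) = (stack_perm x)^-1%g.
Proof. by apply/eqP; rewrite eq_sym eq_invg_mul -stack_permM gmulVr stack_perm1. Qed.

Lemma stack_perm_iter x y : stack_perm x = stack_perm y ->
  forall i : 'I_p, coset_perm (iter i phi x) = coset_perm (iter i phi y).
Proof.
move=> eq_xy i; apply/permP => c.
have := congr1 (fun r : {perm 'I_p * 'I_K} => r (i, c)) eq_xy.
by rewrite !permE /stack_act => -[]; rewrite !permE.
Qed.

(** The kernel of [stack_perm] is [φ]-invariant, thanks to the period. *)
Lemma stack_perm_phi x y : stack_perm x = stack_perm y -> stack_perm (phi x) = stack_perm (phi y).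
Proof.
move=> eq_xy; apply/permP => -[i c]; rewrite !permE /stack_act /= -!iterSr.
have [lt_ip | le_pi] := ltnP i.+1 p.
  by rewrite (stack_perm_iter _ _ eq_xy (Ordinal lt_ip)).
have -> : i.+1 = p by apply/eqP; rewrite eqn_leq le_pi ltn_ord.
by rewrite -!period (stack_perm_iter _ _ eq_xy (Ordinal p_gt0)).
Qed.

(** The kernel of [stack_perm] lies in [N] (component [i = 0]). *)
Lemma stack_perm_ker z : stack_perm z = 1%g -> N z.
Proof.
rewrite -stack_perm1 => triv; apply: coset_perm_ker.
by have := stack_perm_iter _ _ triv (Ordinal p_gt0); rewrite /= coset_perm1.
Qed.

Definition Qset : {set {perm 'I_p * 'I_K}} := [set t | classical_bool (exists x, stack_perm x = t)].
Lemma in_Qset t : t \in Qset <-> exists x, stack_perm x = t.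
Proof. by rewrite inE; apply: classical_boolP. Qed.
Lemma stack_perm_in x : stack_perm x \in Qset.
Proof. by apply/in_Qset; exists x. Qed.
Lemma Qset_group : group_set Qset.
Proof.
apply/group_setP; split; first by rewrite -stack_perm1 stack_perm_in.
by move=> a b /in_Qset [x <-] /in_Qset [y <-]; rewrite -stack_permM stack_perm_in.
Qed.
Definition Q : {group {perm 'I_p * 'I_K}} := group Qset_group.

Definition preimage (t : {perm 'I_p * 'I_K}) : G :=
  epsilon (inhabits gone) (fun x => stack_perm x = t).
Definition quot_phi t := stack_perm (phi (preimage t)).

Lemma quot_phiE x : quot_phi (stack_perm x) = stack_perm (phi x).
Proof.
apply: stack_perm_phi; apply: (epsilon_spec (inhabits gone) (fun y => stack_perm y = _)).
by exists x.
Qed.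
Lemma quot_phiM a b : a \in Q -> b \in Q -> quot_phi (a * b)%g = (quot_phi a * quot_phi b)%g.
Proof.
by move=> /in_Qset [x <-] /in_Qset [y <-]; rewrite -stack_permM !quot_phiE phi_end stack_permM.
Qed.

Definition twisted_act (t q : {perm 'I_p * 'I_K}) := (q^-1 * t * quot_phi q)%g.
Lemma twisted_act_is_action : is_action Q twisted_act.
Proof.
split; first by move=> q x y; rewrite /twisted_act => /mulIg /mulgI.
by move=> x a b a_Q b_Q; rewrite /twisted_act quot_phiM // invMg !mulgA.
Qed.
Definition twisted_action := Action twisted_act_is_action.

Lemma twisted_action_acts : [acts Q, on Q | twisted_action].
Proof.
apply/subsetP => a a_Q; rewrite inE; apply/andP; split=> //.
rewrite inE; apply/subsetP => x x_Q.
rewrite inE /= /twisted_act; change ((a^-1 * x * quot_phi a)%g \in Q).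
by rewrite !groupM ?groupV // /quot_phi stack_perm_in.
Qed.

Lemma twisted_orbits_card (L : list G) : (forall x, exists u, In u L /\ twisted phi u x) ->
  #|orbit twisted_action Q @: Q| <= length L.
Proof.
move=> L_cover; pose O (i : 'I_(length L)) := orbit twisted_action Q (stack_perm (List.nth i L gone)).
apply: leq_trans (_ : #|O @: [set: 'I_(length L)]| <= _); last first.
  by apply: leq_trans (leq_imset_card _ _) _; rewrite cardsT card_ord.
apply: subset_leq_card; apply/subsetP => _ /imsetP [t /in_Qset [y <-] ->].
have [u [u_L [h ->]]] := L_cover y; have [n [lt_n nth_n]] := In_nth L u gone u_L.
apply/imsetP; exists (Ordinal (introT ssrnat.ltP lt_n)); rewrite ?inE //= /O nth_n.
apply/(orbit_in_eqP (subxx Q)); apply/orbitP; exists (stack_perm (ginv h)); first exact: stack_perm_in.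
by rewrite /= /twisted_act quot_phiE stack_permV invgK (hom_inv phi_end) -!stack_permM.
Qed.

Lemma stack_perm_powers_inj (g : G) (B : nat) :
  (forall i, 0 < i -> i <= B -> ~ N (gpow g i)) ->
  injective (fun i : 'I_B.+1 => stack_perm (gpow g i)).
Proof.
move=> avoid.
have neq i j : i < j -> j <= B -> stack_perm (gpow g i) <> stack_perm (gpow g j).
  move=> lt_ij le_jB; rewrite -(subnKC (ltnW lt_ij)) gpow_add stack_permM => eq_ij.
  apply: (avoid (j - i)); [by rewrite subn_gt0 | exact: leq_trans (leq_subr _ _) le_jB |].
  by apply: stack_perm_ker; apply: (mulgI (stack_perm (gpow g i))); rewrite mulg1 -eq_ij.
move=> i j /= eq_ij; apply: val_inj => /=.
case: (ltngtP i j) => [lt_ij | lt_ji | //].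
  by case: (neq i j lt_ij _ eq_ij); rewrite -ltnS.
by case: (neq j i lt_ji _ (esym eq_ij)); rewrite -ltnS.
Qed.

Lemma fixed_powers_stabilise (g : G) (B : nat) : phi g = g ->
  (forall i, 0 < i -> i <= B -> ~ N (gpow g i)) -> B.+1 <= #|('C_Q[1 | twisted_action])%g|.
Proof.
move=> fix_g avoid.
rewrite -[B.+1]card_ord -cardsT -(card_imset _ (stack_perm_powers_inj _ _ avoid)).
apply: subset_leq_card; apply/subsetP => _ /imsetP [i _ ->].
have Q_gi : classical_bool (exists x, stack_perm x = stack_perm (gpow g i)).
  by apply/classical_boolP; exists (gpow g i).
rewrite !inE Q_gi sub1set inE /= /twisted_act.
by rewrite quot_phiE (hom_pow phi_end) fix_g mulg1 mulVg.
Qed.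
End Quotient.
End Periodicity.
End CosetPermutations.

(** An automorphism-like [φ] (surjective endomorphism) of a finitely generated,
    torsion-free, residually finite group with finitely many twisted classes
    has no nontrivial fixed point.  Otherwise pick [B] bounding Egyptian
    decompositions of [1] with at most [R(φ)] terms, a finite quotient in which
    [g, ..., gᴮ] survive, and the [φ]-invariant refinement [Q]: its twisted
    action has at most [R(φ)] orbits but the stabiliser of [1] has more than
    [B] elements, contradicting [stabiliser_bound]. *)
Arguments twisted_action_acts {G N N_normal l l_transversal phi phi_end p}.
Arguments twisted_orbits_card {G N N_normal l l_transversal phi phi_end p} p_gt0 period {L}.
Arguments fixed_powers_stabilise {G N N_normal l l_transversal phi phi_end p} p_gt0 period {g B}.

Lemma fixed_point_trivial (G : Defs.group) : finitely_generated G -> torsion_free G ->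
  residually_finite G -> forall phi : G -> G, endomorphism phi -> (forall y, exists x, phi x = y) ->
  forall L : list G, (forall x, exists u, In u L /\ twisted phi u x) ->
  forall g, phi g = g -> g = gone.
Proof.
move=> [S S_gen] G_tf G_rf phi phi_end phi_surj L L_cover g fix_g.
apply: NNPP => g_neq1.
have [B bound] := egyptian_bound_exists (length L) 1.
have [N [N_normal [N_index avoid]]] := residually_finite_powers g G_tf G_rf g_neq1 B.
have [l l_reps] := coset_class_reps N N_normal N_index.
have [p [p_gt0 period]] := coset_perm_period G N N_normal l l_reps S S_gen phi phi_end phi_surj.
have avoid' i : 0 < i -> i <= B -> ~ N (gpow g i).
  by move=> /ssrnat.ltP i_gt0 /ssrnat.leP le_iB; apply: avoid.
have := stabiliser_bound bound (twisted_action_acts p_gt0 period) (erefl _)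
  (twisted_orbits_card p_gt0 period L_cover) 1%g (group1 _).
by move=> /(_ phi_end); rewrite leqNgt (fixed_powers_stabilise p_gt0 period fix_g avoid').
Qed.
End FixedPoints.

(** * The spectrum of [G × F] *)

(** In a finitely generated, torsion-free, residually finite group, an
    automorphism with finitely many twisted classes has trivial twisted
    stabilisers: [g ⋅ x ⋅ φ(g)⁻¹ = x] makes [g] a fixed point of the shifted
    automorphism [shift φ x], which has as many twisted classes as [φ]. *)
Lemma twisted_stabiliser_trivial (G : group) :
  finitely_generated G -> torsion_free G -> residually_finite G ->
  forall phi : G -> G, automorphism phi -> (exists n, n_classes phi n) ->
  forall x g, g ⋅ x ⋅ ginv (phi g) = x -> g = gone.
Proof.
  intros G_fg G_tf G_rf phi [phi_end [_ phi_surj]] [n Hn] x g E.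
  destruct (n_classes_cover phi_end n Hn) as [L L_cover].
  apply (FixedPoints.fixed_point_trivial G G_fg G_tf G_rf (shift phi x)
    (shift_end phi x phi_end) (shift_surj phi x phi_surj) _ (shift_cover phi x L L_cover)).
  apply shift_fixed, E.
Qed.

Lemma spec_prod_sub (G F : group) :
  finitely_generated G -> torsion_free G -> residually_finite G ->
  generated_by_torsion F ->
  forall r, SpecR (prod_group G F) r -> set_mul (@SpecR G) (@SpecR F) r.
Proof.
  intros G_fg G_tf G_rf F_tgen r [psi [psi_aut R_psi]].
  set (phi := aut_phi G F psi). set (alpha := aut_alpha G F psi).
  pose proof (aut_phi_aut G F G_tf F_tgen psi psi_aut) as phi_aut.
  pose proof (aut_alpha_aut G F G_tf F_tgen psi psi_aut) as alpha_aut.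
  destruct (reidemeister_exists (psi := phi)) as [rp Rp].
  destruct (reidemeister_exists (psi := alpha)) as [ra Ra].
  exists rp, ra. split; [exists phi; auto | split; [exists alpha; auto |]].
  apply (reidemeister_unique (proj1 psi_aut) _ _ R_psi).
  apply (reidemeister_triangular G F phi alpha (aut_delta G F psi) psi (proj1 phi_aut)
    (proj1 alpha_aut) (aut_delta_mul G F psi psi_aut) (proj1 psi_aut)
    (psi_triangular G F G_tf F_tgen psi psi_aut)); auto.
  intros phi_fin x g E.
  rewrite (twisted_stabiliser_trivial G G_fg G_tf G_rf phi phi_aut phi_fin x g E).
  apply (hom_one (aut_delta_mul G F psi psi_aut)).
Qed.

(** Conversely [φ × α] realises [R(φ) R(α)]; here [δ = 1] kills everything. *)
Lemma spec_prod_sup (G F : group) r :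
  set_mul (@SpecR G) (@SpecR F) r -> SpecR (prod_group G F) r.
Proof.
  intros [rp [ra [[phi [phi_aut Rp]] [[alpha [alpha_aut Ra]] ->]]]].
  pose proof (diagonal_aut G F phi alpha phi_aut alpha_aut) as psi_aut.
  eexists. split; [exact psi_aut|].
  apply (reidemeister_triangular G F phi alpha (fun _ => gone) _
    (proj1 phi_aut) (proj1 alpha_aut)); auto.
  - intros. symmetry. apply gmul1l.
  - apply psi_aut.
  - intros g f. simpl. rewrite gmul1l. reflexivity.
Qed.

Theorem mainTheorem13 (G F : group) :
  finitely_generated G -> torsion_free G -> residually_finite G ->
  generated_by_torsion F ->
  forall r : option nat,
    SpecR (prod_group G F) r <-> set_mul (@SpecR G) (@SpecR F) r.
Proof.
  intros G_fg G_tf G_rf F_tgen r. split.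
  - apply spec_prod_sub; assumption.
  - apply spec_prod_sup.
Qed.
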